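(* Let $R$ be a ring with identity and involution $*$, and let $a\in R$. The following conditions are equivalent: (1) $a$ is core invertible; (2) $R = aR \oplus (a^* )^{\circ}$ and $R = aR \oplus a^{\circ}$; (3) $R = aR + (a^* )^{\circ}$ and $R = aR \oplus a^{\circ}$; (4) $R = Ra^* \oplus {}^{\circ}a$ and $R = aR \oplus a^{\circ}$; (5) $R = Ra^* + {}^{\circ}a$ and $R = aR \oplus a^{\circ}$; (6) $R = aR \oplus (a^* )^{\circ}$ and $R = Ra \oplus {}^{\circ}a$; (7) $R = aR + (a^* )^{\circ}$ and $R = Ra \oplus {}^{\circ}a$; (8) $R = Ra^* \oplus {}^{\circ}a$ and $R = Ra \oplus {}^{\circ}a$; (9) $R = Ra^* + {}^{\circ}a$ and $R = Ra \oplus {}^{\circ}a$. In this case, $$a^{\oplus} = a y_1^2 a x_1 = a y_1^2 a x_2^* = y_2 a x_1 = y_2 a x_2^*,$$ where $x_1,x_2,y_1,y_2\in R$ are any elements with $1 = ax_1 + u_1 = x_2 a^* + u_2 = a y_1 + v_1 = y_2 a + v_2$ for some $u_1 \in (a^* )^{\circ}$, $v_1 \in a^{\circ}$ and $u_2, v_2 \in {}^{\circ}a$.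
   Context: An involution on $R$ satisfies $(a^* )^*=a$, $(ab)^*=b^*a^*$, $(a+b)^*=a^*+b^*$. An element $x\in R$ is a core inverse of $a$ if $axa=a$, $xR=aR$ and $Rx=Ra^*$; it is unique, denoted $a^{\oplus}$, and $a$ is then core invertible. For $c\in R$: $cR=\{cx: x\in R\}$, $Rc=\{xc:x\in R\}$, $c^{\circ}=\{x\in R: cx=0\}$ (right annihilator), ${}^{\circ}c=\{x\in R: xc=0\}$ (left annihilator). ''$R = A \oplus B$'' means $R=A+B$ with $A\cap B=\{0\}$. *)

From mathcomp Require Import all_boot all_algebra.
Set Implicit Arguments. Unset Strict Implicit. Unset Printing Implicit Defensive.
Import GRing.Theory.
Local Open Scope ring_scope.

(* Subsets of R are represented as predicates R -> Prop. *)

Definition is_involution (R : pzRingType) (star : R -> R) : Prop :=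
  [/\ forall a, star (star a) = a,
      forall a b, star (a * b) = star b * star a &
      forall a b, star (a + b) = star a + star b].

Definition rideal (R : pzRingType) (c : R) : R -> Prop := fun z => exists x, z = c * x.
Definition lideal (R : pzRingType) (c : R) : R -> Prop := fun z => exists x, z = x * c.
Definition rann (R : pzRingType) (c : R) : R -> Prop := fun x => c * x = 0.
Definition lann (R : pzRingType) (c : R) : R -> Prop := fun x => x * c = 0.

Definition set_eq (R : Type) (A B : R -> Prop) : Prop := forall z, A z <-> B z.

Definition sum_full (R : pzRingType) (A B : R -> Prop) : Prop :=
  forall z, exists x y, [/\ A x, B y & z = x + y].

Definition dsum_full (R : pzRingType) (A B : R -> Prop) : Prop :=
  sum_full A B /\ (forall z, A z -> B z -> z = 0).

Definition core_inverse (R : pzRingType) (star : R -> R) (a x : R) : Prop :=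
  [/\ a * x * a = a, set_eq (rideal x) (rideal a) & set_eq (lideal x) (lideal (star a))].

Definition core_invertible (R : pzRingType) (star : R -> R) (a : R) : Prop :=
  exists x, core_inverse star a x.

From mathcomp Require Import all_boot all_algebra.
Import GRing.Theory.
Local Open Scope ring_scope.
Set Implicit Arguments. Unset Strict Implicit.

(** Each condition is the conjunction of two independent properties of [a].
    Its second component says that [a] is group invertible: from [1 = a y + v]
    with [a v = 0], directness of the sum forces [a y y] to be the group
    inverse (and symmetrically on the left).  Its first component, whichever of
    the four forms it takes, says that [a' = a' a x] for some [x], where [a'] is
    the involution of [a]; applying the involution gives [x' a' a = a], so [a']
    is left cancellable on [aR], which yields both direct sums.  A core inverse
    [c] has group inverse [c c a] and satisfies [a' a c = a']; conversely, from
    the group inverse [g] and such an [x] the core inverse is [g a x].  Since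
    [a x = a c] and [c] lies in [aR], [c = g a x] holds for every [g] with
    [g a a = a], which gives the four formulas. *)

Definition group_inverse (R : pzRingType) (a g : R) :=
  [/\ a * g * a = a, g * a * g = g & a * g = g * a].

Definition group_invertible (R : pzRingType) (a : R) := exists g, group_inverse a g.

Section GroupInverse.
Variables (R : pzRingType) (a : R).

Lemma group_inverse_mulKl g : group_inverse a g -> g * a * a = a.
Proof. by case=> aga _ <-. Qed.

Lemma group_inverse_rev g : group_inverse (R := R^c) a g <-> group_inverse a g.
Proof.
split=> -[aga gag ag_ga]; split=> //.
- by have : (a : R) * ((g : R) * a) = a := aga; rewrite mulrA.
- by have : (g : R) * ((a : R) * g) = g := gag; rewrite mulrA.
- by change ((a : R) * ((g : R) * a) = a); rewrite mulrA.
- by change ((g : R) * ((a : R) * g) = g); rewrite mulrA.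
Qed.

Lemma group_inverse_dsum_rideal_rann g :
  group_inverse a g -> dsum_full (rideal a) (rann a).
Proof.
move=> gi; have [aga _ ag_ga] := gi.
have a_aag : a * (a * g) = a by rewrite ag_ga mulrA aga.
split=> [z|_ [r ->] ar0].
- exists (a * (g * z)), (z - a * (g * z)); split; first by exists (g * z).
  + by rewrite /rann mulrBr (mulrA a g z) mulrA a_aag subrr.
  + by rewrite addrC subrK.
- by rewrite -(group_inverse_mulKl gi) -!mulrA ar0 mulr0.
Qed.

Lemma rideal_rann_group_inverse y :
  (forall z, rideal a z -> rann a z -> z = 0) ->
  a * (a * y) = a -> group_inverse a (a * y * y).
Proof.
move=> aR_rann0 a_aay.
have eq_ann z z' : rideal a (z - z') -> a * z = a * z' -> z = z'.
  move=> zaR az; apply/eqP; rewrite -subr_eq0; apply/eqP/aR_rann0 => //.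
  by rewrite /rann mulrBr az subrr.
have aya : a * y * a = a.
  apply: eq_ann; first by exists (y * a - 1); rewrite mulrBr mulr1 mulrA.
  by rewrite !mulrA -(mulrA a a y) a_aay.
have ayya : a * y * y * a = a * y.
  apply: eq_ann; first by exists (y * y * a - y); rewrite mulrBr !mulrA.
  by rewrite !mulrA -(mulrA a a y) a_aay aya.
split.
- by rewrite !mulrA -(mulrA a a y) a_aay aya.
- by rewrite ayya !mulrA aya.
- by rewrite !mulrA -(mulrA a a y) a_aay ayya.
Qed.

Lemma dsum_rideal_rannP : dsum_full (rideal a) (rann a) <-> group_invertible a.
Proof.
split=> [[aR_sum aR_rann0] | [g /group_inverse_dsum_rideal_rann //]].
have [_ [v [[y ->] av0 one_eq]]] := aR_sum 1.
exists (a * y * y); apply: rideal_rann_group_inverse => //.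
by rewrite -{3}(mulr1 a) one_eq mulrDr av0 addr0.
Qed.

End GroupInverse.

(* [lideal a] and [lann a] are convertible to [rideal a] and [rann a] in the
   converse ring [R^c]. *)
Lemma dsum_lideal_lannP (R : pzRingType) (a : R) :
  dsum_full (lideal a) (lann a) <-> group_invertible a.
Proof.
split=> [/(dsum_rideal_rannP (R := R^c)) [g /group_inverse_rev gi] | [g gi]].
  by exists g.
by apply/(dsum_rideal_rannP (R := R^c)); exists g; apply/group_inverse_rev.
Qed.

Section Involution.
Variables (R : pzRingType) (star : R -> R).
Hypothesis star_inv : is_involution star.

Let starK x : star (star x) = x. Proof. by case: star_inv. Qed.
Let starM x y : star (x * y) = star y * star x. Proof. by case: star_inv. Qed.
Let starD x y : star (x + y) = star x + star y. Proof. by case: star_inv. Qed.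

Let star0 : star 0 = 0.
Proof. by apply: (addrI (star 0)); rewrite -starD !addr0. Qed.

Let star1 : star 1 = 1.
Proof. by have := starM 1 (star 1); rewrite mul1r starK mul1r. Qed.

Variable a : R.

Section Witness.
Variable x : R.
Hypothesis absorb : star a * (a * x) = star a.

Lemma star_absorb_adj : star x * star a * a = a.
Proof. by have := congr1 star absorb; rewrite !starM !starK. Qed.

Lemma star_absorb_cancel r : star a * (a * r) = 0 -> a * r = 0.
Proof. by move=> ar0; rewrite -star_absorb_adj -!mulrA ar0 mulr0. Qed.

Lemma star_absorb_dsum_rideal_rann_star : dsum_full (rideal a) (rann (star a)).
Proof.
split=> [z|_ [r ->] /star_absorb_cancel //].
exists (a * (x * z)), (z - a * (x * z)); split; first by exists (x * z).
- by rewrite /rann mulrBr (mulrA a x z) mulrA absorb subrr.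
- by rewrite addrC subrK.
Qed.

Lemma star_absorb_dsum_lideal_star_lann : dsum_full (lideal (star a)) (lann a).
Proof.
split=> [z|_ [r ->] ra0].
- exists (z * star x * star a), (z - z * star x * star a); split.
  + by exists (z * star x).
  + by rewrite /lann mulrBl -!mulrA (mulrA (star x)) star_absorb_adj subrr.
  + by rewrite addrC subrK.
- by rewrite -absorb !mulrA (ra0 : r * star a * a = 0) mul0r.
Qed.

End Witness.

Lemma rdecomp_star_absorb x u :
  1 = a * x + u -> rann (star a) u -> star a * (a * x) = star a.
Proof. by move=> one_eq au0; rewrite -{2}[star a]mulr1 one_eq mulrDr au0 addr0. Qed.

Lemma ldecomp_star_absorb x u :
  1 = x * star a + u -> lann a u -> star a * (a * star x) = star a.
Proof.
move=> one_eq ua0; apply: (rdecomp_star_absorb (u := star u)).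
  by rewrite -star1 one_eq starD starM starK.
by rewrite /rann -starM (ua0 : u * a = 0) star0.
Qed.

Lemma sum_rideal_rann_starP :
  sum_full (rideal a) (rann (star a)) <-> exists x, star a * (a * x) = star a.
Proof.
split=> [/(_ 1) [_ [u [[x ->] au0 one_eq]]] | [x absorb] z].
  by exists x; apply: rdecomp_star_absorb au0.
exact: (star_absorb_dsum_rideal_rann_star absorb).1.
Qed.

Lemma sum_lideal_star_lannP :
  sum_full (lideal (star a)) (lann a) <-> exists x, star a * (a * x) = star a.
Proof.
split=> [/(_ 1) [_ [u [[x ->] ua0 one_eq]]] | [x absorb] z].
  by exists (star x); apply: ldecomp_star_absorb ua0.
exact: (star_absorb_dsum_lideal_star_lann absorb).1.
Qed.

Lemma dsum_rideal_rann_starP :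
  dsum_full (rideal a) (rann (star a)) <-> exists x, star a * (a * x) = star a.
Proof.
split=> [[/sum_rideal_rann_starP //] | [x /star_absorb_dsum_rideal_rann_star //]].
Qed.

Lemma dsum_lideal_star_lannP :
  dsum_full (lideal (star a)) (lann a) <-> exists x, star a * (a * x) = star a.
Proof.
split=> [[/sum_lideal_star_lannP //] | [x /star_absorb_dsum_lideal_star_lann //]].
Qed.

Section CoreInverse.
Variable c : R.
Hypothesis core : core_inverse star a c.

Lemma core_inverse_eqs :
  [/\ a * c * a = a, c * a * c = c, c * a * a = a, a * c * c = c
    & star (a * c) = a * c].
Proof.
have [aca aR_cR Ra_Rc] := core.
have [s cE] : rideal a c by apply/aR_cR; exists 1; rewrite mulr1.
have [t aE] : rideal c a by apply/aR_cR; exists 1; rewrite mulr1.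
have [p cE_l] : lideal (star a) c by apply/Ra_Rc; exists 1; rewrite mul1r.
have star_a : star a = star a * star c * star a by rewrite -{1}aca !starM mulrA.
have c_star : c = c * star c * star a by rewrite {1}cE_l {1}star_a !mulrA -cE_l.
have ac_sym : star (a * c) = a * c.
  by rewrite c_star !mulrA !starM !starK !mulrA.
have absorb : star a * (a * c) = star a by rewrite -ac_sym -starM aca.
have cac : c * a * c = c by rewrite {1}cE_l -!mulrA absorb -cE_l.
split=> //; first by rewrite {2}aE mulrA cac -aE.
by rewrite {2}cE mulrA aca -cE.
Qed.

Lemma core_inverse_star_absorb : star a * (a * c) = star a.
Proof. by have [aca _ _ _ <-] := core_inverse_eqs; rewrite -starM aca. Qed.

Lemma core_inverse_group : group_inverse a (c * c * a).
Proof.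
have [aca cac caa acc _] := core_inverse_eqs.
have a_cca : a * (c * c * a) = c * a by rewrite !mulrA acc.
have cca_a : c * c * a * a = c * a by rewrite -!mulrA (mulrA c a a) caa.
split; first by rewrite a_cca caa.
  by rewrite -mulrA a_cca -!mulrA (mulrA a c a) aca !mulrA.
by rewrite a_cca cca_a.
Qed.

Lemma core_inverse_eq x g :
  star a * (a * x) = star a -> g * a * a = a -> c = g * a * x.
Proof.
move=> absorb gaa.
have ax : a * x = a * c.
  apply/eqP; rewrite -subr_eq0 -mulrBr; apply/eqP.
  apply: (star_absorb_cancel core_inverse_star_absorb).
  by rewrite !mulrBr absorb core_inverse_star_absorb subrr.
have [_ aR_cR _] := core.
have [s cE] : rideal a c by apply/aR_cR; exists 1; rewrite mulr1.
by rewrite -mulrA ax {2}cE !mulrA gaa -cE.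
Qed.

End CoreInverse.

Lemma group_inverse_core_inverse g x :
  group_inverse a g -> star a * (a * x) = star a -> core_inverse star a (g * a * x).
Proof.
move=> [aga gag ag_ga] absorb.
have ax : a * x = star x * star a.
  by rewrite -{1}(star_absorb_adj absorb) -!mulrA absorb.
have axa : a * x * a = a by rewrite ax star_absorb_adj.
have g_agg : g = a * g * g by rewrite ag_ga -{1}gag.
have gaa : g * a * a = a by rewrite -ag_ga aga.
split; first by rewrite !mulrA aga axa.
- move=> z; split=> -[s ->].
    by exists (g * g * a * x * s); rewrite {1}g_agg !mulrA.
  by exists (a * a * s); rewrite !mulrA -(mulrA g a x) -(mulrA g (a * x) a) axa gaa.
- move=> z; split=> -[s ->].
    by exists (s * g * star x); rewrite -!mulrA ax.
  exists (s * star a * a).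
  by rewrite -!mulrA (mulrA g a x) (mulrA a (g * a)) (mulrA a g) aga absorb.
Qed.

Lemma core_invertibleP :
  core_invertible star a <->
  (exists x, star a * (a * x) = star a) /\ group_invertible a.
Proof.
split=> [[c core] | [[x absorb] [g gi]]].
  split; first by exists c; apply: core_inverse_star_absorb.
  by exists (c * c * a); apply: core_inverse_group.
by exists (g * a * x); apply: group_inverse_core_inverse.
Qed.

End Involution.

Theorem proposition2p11 (R : pzRingType) (star : R -> R) (a : R) :
  is_involution star ->
  [<-> core_invertible star a;
       dsum_full (rideal a) (rann (star a)) /\ dsum_full (rideal a) (rann a);
       sum_full (rideal a) (rann (star a)) /\ dsum_full (rideal a) (rann a);
       dsum_full (lideal (star a)) (lann a) /\ dsum_full (rideal a) (rann a);
       sum_full (lideal (star a)) (lann a) /\ dsum_full (rideal a) (rann a);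
       dsum_full (rideal a) (rann (star a)) /\ dsum_full (lideal a) (lann a);
       sum_full (rideal a) (rann (star a)) /\ dsum_full (lideal a) (lann a);
       dsum_full (lideal (star a)) (lann a) /\ dsum_full (lideal a) (lann a);
       sum_full (lideal (star a)) (lann a) /\ dsum_full (lideal a) (lann a)]
  /\
  (forall c : R, core_inverse star a c ->
   forall x1 x2 y1 y2 u1 u2 v1 v2 : R,
     1 = a * x1 + u1 -> 1 = x2 * star a + u2 ->
     1 = a * y1 + v1 -> 1 = y2 * a + v2 ->
     rann (star a) u1 -> rann a v1 -> lann a u2 -> lann a v2 ->
     [/\ c = a * y1 ^+ 2 * a * x1,
         c = a * y1 ^+ 2 * a * star x2,
         c = y2 * a * x1 &
         c = y2 * a * star x2]).
Proof.
move=> star_inv; split.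
  have cond_iff S G : (S <-> exists x, star a * (a * x) = star a) ->
      (G <-> group_invertible a) -> S /\ G <-> core_invertible star a.
    move=> SP GP; apply: iff_trans (iff_sym (core_invertibleP star_inv a)).
    by split=> -[/SP s /GP g]; split.
  have E1 := cond_iff _ _ (dsum_rideal_rann_starP star_inv a) (dsum_rideal_rannP a).
  have E2 := cond_iff _ _ (sum_rideal_rann_starP star_inv a) (dsum_rideal_rannP a).
  have E3 := cond_iff _ _ (dsum_lideal_star_lannP star_inv a) (dsum_rideal_rannP a).
  have E4 := cond_iff _ _ (sum_lideal_star_lannP star_inv a) (dsum_rideal_rannP a).
  have E5 := cond_iff _ _ (dsum_rideal_rann_starP star_inv a) (dsum_lideal_lannP a).
  have E6 := cond_iff _ _ (sum_rideal_rann_starP star_inv a) (dsum_lideal_lannP a).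
  have E7 := cond_iff _ _ (dsum_lideal_star_lannP star_inv a) (dsum_lideal_lannP a).
  have E8 := cond_iff _ _ (sum_lideal_star_lannP star_inv a) (dsum_lideal_lannP a).
  tfae=> [/E1 | /E1/E2 | /E2/E3 | /E3/E4 | /E4/E5 | /E5/E6 | /E6/E7 | /E7/E8 | /E8] //.
move=> c core x1 x2 y1 y2 u1 u2 v1 v2 ax1 x2a ay1 y2a au1 av1 u2a v2a.
have absorb1 := rdecomp_star_absorb ax1 au1.
have absorb2 := ldecomp_star_absorb star_inv x2a u2a.
have [_ aR_rann0] := group_inverse_dsum_rideal_rann (core_inverse_group star_inv core).
have ay1_aa : a * y1 ^+ 2 * a * a = a.
  rewrite expr2 mulrA; apply/group_inverse_mulKl/rideal_rann_group_inverse => //.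
  by rewrite -{3}(mulr1 a) ay1 mulrDr (av1 : a * v1 = 0) addr0.
have y2_aa : y2 * a * a = a.
  by rewrite -{3}(mul1r a) y2a mulrDl (v2a : v2 * a = 0) addr0.
by split; apply: (core_inverse_eq star_inv core).
Qed.
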